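(* Suppose $\mathcal M$ is unichain. For every state $s\in\mathcal S$, the optimal activation advantage $\lambda\mapsto\alpha^*_s(\lambda)$ is $(2D_{\max}+1)$-Lipschitz continuous on $\mathbb R$, where $D_{\max}:=\max_{\pi\subseteq\mathcal S}D(P^\pi)$.
   Context: Setting. An MDP is $\mathcal M=(\mathcal S,\{0,1\},(P^a)_a,(r^a)_a)$, finite $\mathcal S$, row-stochastic $P^0,P^1$, rewards $r^0,r^1\in\mathbb R^{\mathcal S}$. A policy is a subset $\pi\subseteq\mathcal S$ of states where action 1 is played, inducing $P^\pi$, $r^\pi$; $\mathcal M$ is unichain if every $P^\pi$ has a single recurrent class. For $\lambda\in\mathbb R$, $\mathcal M(\lambda)$ has the same transitions and rewards $r^1-\lambda\mathbf 1$ (action 1), $r^0$ (action 0). For a unichain policy, bias $b^\pi(\lambda)$ solves $g^\pi\mathbf 1+b^\pi=r^\pi+P^\pi b^\pi$; activation advantage $\alpha^\pi_s(\lambda)=r^1_s-\lambda-r^0_s+(P^1_{s,\cdot}-P^0_{s,\cdot})\cdot b^\pi(\lambda)$. A policy is BO (bias optimal) in $\mathcal M(\lambda)$ if gain optimal and bias-maximal among gain-optimal policies; for unichain MDPs $\pi$ is BO iff $\alpha^\pi_s(\lambda)\ge0$ for $s\in\pi$, $\le0$ for $s\notin\pi$. The optimal activation advantage $\alpha^*_s(\lambda):=\alpha^\pi_s(\lambda)$ for any BO policy $\pi$ of $\mathcal M(\lambda)$ (independent of the choice); it is continuous and piecewise affine in $\lambda$. Diameter of unichain $P$ with recurrent class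 $\mathcal S_r$: $D(P)=\max_{s\in\mathcal S,s'\in\mathcal S_r}\mathbb E^P[\tau_{s,s'}]$. *)

From HB Require Import structures.
From mathcomp Require Import all_boot all_order all_algebra.
From mathcomp Require Import all_classical all_reals.
From mathcomp Require Import ereal topology normedtype sequences.

Set Implicit Arguments.
Unset Strict Implicit.
Unset Printing Implicit Defensive.

Import Order.TTheory GRing.Theory Num.Theory.
Local Open Scope ring_scope.

Section MDP.
Variables (R : realType) (S : finType).

Definition row_stochastic (P : S -> S -> R) : Prop :=
  (forall s t, 0 <= P s t) /\ (forall s, \sum_(t : S) P s t = 1).

(* policy pi : {set S} = states where action 1 is played *)
Definition Ppol (P0 P1 : S -> S -> R) (pi : {set S}) : S -> S -> R :=
  fun s t => if s \in pi then P1 s t else P0 s t.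

(* rewards of M(lambda): r1 - lambda for action 1, r0 for action 0 *)
Definition rpol (r0 r1 : S -> R) (l : R) (pi : {set S}) : S -> R :=
  fun s => if s \in pi then r1 s - l else r0 s.

Definition reach (P : S -> S -> R) : rel S := connect (fun s t => 0 < P s t).

Definition recurrent (P : S -> S -> R) (s : S) : bool :=
  [forall t, reach P s t ==> reach P t s].

Definition unichain_chain (P : S -> S -> R) : Prop :=
  (exists s, recurrent P s) /\
  (forall s t, recurrent P s -> recurrent P t -> reach P s t).

Definition unichain (P0 P1 : S -> S -> R) : Prop :=
  forall pi : {set S}, unichain_chain (Ppol P0 P1 pi).

Definition stationary (P : S -> S -> R) (mu : S -> R) : Prop :=
  (forall s, 0 <= mu s) /\ \sum_(s : S) mu s = 1 /\
  (forall t, mu t = \sum_(s : S) mu s * P s t).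

(* (g, b) is the gain / bias pair of the chain (P, r): evaluation equations
   g 1 + b = r + P b, normalised by P^* b = 0 (P^* rows = stationary law) *)
Definition gain_bias (P : S -> S -> R) (r : S -> R) (g : R) (b : S -> R) : Prop :=
  (forall s, g + b s = r s + \sum_(t : S) P s t * b t) /\
  exists mu, stationary P mu /\ \sum_(s : S) mu s * b s = 0.

Definition bias_optimal (P0 P1 : S -> S -> R) (r0 r1 : S -> R) (l : R)
    (pi : {set S}) : Prop :=
  exists g b, gain_bias (Ppol P0 P1 pi) (rpol r0 r1 l pi) g b /\
    forall (pi' : {set S}) g' b',
      gain_bias (Ppol P0 P1 pi') (rpol r0 r1 l pi') g' b' ->
      g' <= g /\ (g' = g -> forall s, b' s <= b s).

Definition act_adv (P0 P1 : S -> S -> R) (r0 r1 : S -> R) (b : S -> R)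
    (l : R) (s : S) : R :=
  r1 s - l - r0 s + \sum_(t : S) (P1 s t - P0 s t) * b t.

(* avoid P s' n s = P(tau_{s,s'} > n): probability that the chain started at s
   is not in s' at any of the times 0..n (first-step recursion of path sums) *)
Fixpoint avoid (P : S -> S -> R) (s' : S) (n : nat) (s : S) : R :=
  match n with
  | 0 => if s == s' then 0 else 1
  | n.+1 => if s == s' then 0 else \sum_(u : S) P s u * avoid P s' n u
  end.

Local Open Scope ereal_scope.

(* E[tau_{s,s'}] = sum_{n>=0} P(tau > n), tau = min{n >= 0 : X_n = s'} *)
Definition exp_hit (P : S -> S -> R) (s s' : S) : \bar R :=
  \sum_(n <oo) (avoid P s' n s)%:E.

Definition diameter (P : S -> S -> R) : \bar R :=
  \big[Order.max/0]_(s : S) \big[Order.max/0]_(s' : S | recurrent P s') exp_hit P s s'.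

Definition Dmax (P0 P1 : S -> S -> R) : \bar R :=
  \big[Order.max/0]_(pi : {set S}) diameter (Ppol P0 P1 pi).

End MDP.

From HB Require Import structures.
From mathcomp Require Import all_boot all_order all_algebra.
From mathcomp Require Import all_classical all_reals.
From mathcomp Require Import ereal topology normedtype sequences.
From Stdlib Require Import Lia.
From mathcomp Require Import zify ring lra.
Import Order.TTheory GRing.Theory Num.Theory.
Local Open Scope ring_scope.
Set Implicit Arguments.
Unset Strict Implicit.
Unset Printing Implicit Defensive.

(* Let pi1, pi2 be bias optimal in M(l1), M(l2) with biases b1, b2, and d := b1 - b2.
   Bias optimality gives the Bellman inequality r^sigma + P^sigma b <= g + b for every
   policy sigma; comparing it for pi2 with the evaluation equation of pi1 shows
   d - P^pi1 d <= (g2 - g1) - (l1 - l2) 1_pi1.  Averaging against the stationary laws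
   of pi1 and pi2 traps g2 - g1 between (l1 - l2) times two occupation probabilities, so
   d has drift at most |l1 - l2| under P^pi1, and so does -d under P^pi2.  First-step
   analysis turns a drift bound C into v x - v y <= C E[tau_(x,y)], and with y recurrent
   for both policies the oscillation of d is at most |l1 - l2| D_max.  Finally
   alpha*(l1) - alpha*(l2) = -(l1 - l2) + (P^1 - P^0)_s d. *)

Section Reachability.
Variables (R : realType) (S : finType) (P : S -> S -> R).

Definition closed_under (A : pred S) := forall x t, A x -> 0 < P x t -> A t.

Lemma reach_closed (A : pred S) x t :
  closed_under A -> A x -> reach P x t -> A t.
Proof.
move=> clA Ax /connectP [p pth ->]; elim: p x Ax pth => [|z p IH] x Ax //=.
by case/andP=> Pxz pth; apply: IH (clA _ _ Ax Pxz) pth.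
Qed.

(* A state reachable from [x0] with the fewest reachable states is recurrent. *)
Lemma closed_recurrent (A : pred S) x0 :
  closed_under A -> A x0 -> exists2 y, A y & recurrent P y.
Proof.
move=> clA Ax0.
have [|y x0y ymin] := @arg_minnP S x0 (reach P x0)
  (fun y => #|[set t | reach P y t]|); first exact: connect0.
exists y; first exact: reach_closed x0y.
apply/forallP=> t; apply/implyP=> yt.
have sub : [set u | reach P t u] \subset [set u | reach P y u].
  by apply/fintype.subsetP=> u; rewrite !inE; apply: connect_trans.
have/eqP eq_reach : [set u | reach P t u] == [set u | reach P y u].
  by rewrite eqEcard sub ymin //; apply: connect_trans yt.
have : y \in [set u | reach P y u] by rewrite inE; apply: connect0.
by rewrite -eq_reach inE.
Qed.

Lemma recurrent_reach y t : recurrent P y -> reach P y t -> recurrent P t.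
Proof.
move=> /forallP yrec yt; apply/forallP=> u; apply/implyP=> tu.
have /implyP/(_ (connect_trans yt tu)) uy := yrec u.
exact: connect_trans uy yt.
Qed.

Lemma recurrent_closed : closed_under (recurrent P).
Proof. by move=> x t xrec Pxt; apply: recurrent_reach xrec (connect1 _). Qed.

End Reachability.

Section MarkovChain.
Variables (R : realType) (S : finType) (P : S -> S -> R).
Hypothesis HP : row_stochastic P.

Lemma stoch_ge0 x t : 0 <= P x t. Proof. by case: HP. Qed.

Lemma stoch_sum1 x : \sum_t P x t = 1. Proof. by case: HP. Qed.

Lemma stoch_sum_const x c : \sum_t P x t * c = c.
Proof. by rewrite -big_distrl /= stoch_sum1 mul1r. Qed.

Lemma stoch_sumB_const x (w : S -> R) c :
  \sum_t P x t * (w t - c) = \sum_t P x t * w t - c.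
Proof.
by under eq_bigr do rewrite mulrBr; rewrite sumrB stoch_sum_const.
Qed.

Lemma stoch_norm_le x (w : S -> R) c :
  (forall t, `|w t| <= c) -> `|\sum_t P x t * w t| <= c.
Proof.
move=> wc; apply: le_trans (ler_norm_sum _ _ _) _.
rewrite -[leRHS](stoch_sum_const x); apply: ler_sum => t _.
by rewrite normrM ger0_norm ?stoch_ge0 // ler_wpM2l ?stoch_ge0.
Qed.

Lemma stationary_ge_flow mu x t : stationary P mu -> mu x * P x t <= mu t.
Proof.
move=> [mu_ge0 [_ mu_inv]]; rewrite [leRHS]mu_inv (bigD1 x) //= lerDl.
by apply: sumr_ge0 => u _; rewrite mulr_ge0 ?stoch_ge0.
Qed.

(* Mass entering [T] only comes from [T], so stationarity forbids any flow out of it. *)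
Lemma stationary_no_outflow (T : pred S) mu x :
  (forall s t, ~~ T s -> T t -> P s t = 0) -> stationary P mu -> T x ->
  mu x * \sum_(t | ~~ T t) P x t = 0.
Proof.
move=> no_inflow [mu_ge0 [_ mu_inv]] Tx.
have PT s : \sum_(t | T t) P s t = 1 - \sum_(t | ~~ T t) P s t.
  by rewrite -(stoch_sum1 s) [X in _ = X - _](bigID T) /= addrK.
have flow : \sum_(t | T t) mu t = \sum_(s | T s) mu s * \sum_(t | T t) P s t.
  rewrite (eq_bigr _ (fun t _ => mu_inv t)) exchange_big /= (bigID T) /=.
  rewrite [X in _ + X]big1 ?addr0 => [|s Ts].
    by apply: eq_bigr => s _; rewrite big_distrr.
  by rewrite -big_distrr /= big1 ?mulr0 // => t; apply: no_inflow.
have out0 : \sum_(s | T s) mu s * \sum_(t | ~~ T t) P s t = 0.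
  move: flow; under [X in _ = X]eq_bigr do rewrite PT mulrBr mulr1.
  by rewrite sumrB => /eqP; rewrite eq_sym subr_eq addrC -subr_eq subrr => /eqP.
apply: (psumr_eq0P _ out0) => // s _.
by rewrite mulr_ge0 // sumr_ge0 // => t _; apply: stoch_ge0.
Qed.

Lemma stationary_avg_defect0 mu (w : S -> R) :
  stationary P mu -> \sum_x mu x * (w x - \sum_t P x t * w t) = 0.
Proof.
move=> [_ [_ mu_inv]]; under eq_bigr do rewrite mulrBr.
rewrite sumrB; apply/eqP; rewrite subr_eq0; apply/eqP.
under [RHS]eq_bigr do rewrite big_distrr /=.
rewrite exchange_big /=; apply: eq_bigr => t _.
by rewrite mu_inv big_distrl /=; apply: eq_bigr => x _; rewrite mulrA.
Qed.

Lemma gain_eq_stationary_avg mu (f h : S -> R) g :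
  stationary P mu -> (forall x, g + h x = f x + \sum_t P x t * h t) ->
  g = \sum_x mu x * f x.
Proof.
move=> stat gh; have [_ [mu_sum1 _]] := stat.
have defect x : h x - \sum_t P x t * h t = f x - g by have := gh x; lra.
have := stationary_avg_defect0 h stat; under eq_bigr do rewrite defect mulrBr.
rewrite sumrB -big_distrl /= mu_sum1 mul1r => /eqP; rewrite subr_eq0 => /eqP.
by move=> ->.
Qed.

Lemma stationary_of_invariant (nu : S -> R) x0 :
  nu x0 != 0 -> (forall t, nu t = \sum_x nu x * P x t) -> exists mu, stationary P mu.
Proof.
move=> nu_x0 nu_inv; pose Z := \sum_x `|nu x|.
have abs_sub t : `|nu t| <= \sum_x `|nu x| * P x t.
  rewrite {1}nu_inv; apply: le_trans (ler_norm_sum _ _ _) _.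
  by apply: ler_sum => x _; rewrite normrM (ger0_norm (stoch_ge0 x t)).
have abs_total : \sum_t \sum_x `|nu x| * P x t = Z.
  rewrite exchange_big /=; apply: eq_bigr => x _.
  by rewrite -big_distrr /= stoch_sum1 mulr1.
have abs_inv t : `|nu t| = \sum_x `|nu x| * P x t.
  have gap0 : \sum_u (\sum_x `|nu x| * P x u - `|nu u|) = 0.
    by rewrite sumrB abs_total subrr.
  apply/eqP; rewrite eq_sym -subr_eq0; apply/eqP.
  by apply: (psumr_eq0P _ gap0) => // u _; rewrite subr_ge0.
have Z_gt0 : 0 < Z.
  rewrite /Z (bigD1 x0) //=; apply: (lt_le_trans (_ : 0 < `|nu x0|)).
    by rewrite normr_gt0.
  by rewrite lerDl; apply: sumr_ge0.
exists (fun x => `|nu x| / Z); split; [|split].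
- by move=> x; rewrite divr_ge0 // ltW.
- by rewrite -big_distrl /= mulfV // gt_eqF.
- by move=> t; rewrite abs_inv big_distrl /=; apply: eq_bigr => x _; rewrite mulrAC.
Qed.

Hypothesis uc : unichain_chain P.

Lemma superharmonic_argmin_closed (w : S -> R) z :
  (forall x, \sum_t P x t * w t <= w x) -> (forall x, w z <= w x) ->
  closed_under P [pred x | w x == w z].
Proof.
move=> super wmin x t /eqP wx Pxt; apply/eqP.
have terms_ge0 u : 0 <= P x u * (w u - w z) by rewrite mulr_ge0 ?stoch_ge0 ?subr_ge0.
have sum0 : \sum_u P x u * (w u - w z) = 0.
  apply/eqP; rewrite eq_le sumr_ge0 // andbT stoch_sumB_const subr_le0 -wx.
  exact: super.
have /(_ t isT)/eqP := psumr_eq0P (fun u _ => terms_ge0 u) sum0.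
by rewrite mulf_eq0 (gt_eqF Pxt) subr_eq0 => /eqP.
Qed.

Lemma superharmonic_min_recurrent (w : S -> R) y :
  (forall x, \sum_t P x t * w t <= w x) -> recurrent P y -> forall x, w y <= w x.
Proof.
move=> super yrec.
have [z _ wmin] := @arg_minP _ _ S y xpredT w isT.
have clA := superharmonic_argmin_closed super (fun x => wmin x isT).
have [y0 Ay0 y0rec] := closed_recurrent clA (eqxx (w z)).
have /eqP -> := reach_closed clA Ay0 (uc.2 _ _ y0rec yrec).
by move=> x; apply: wmin.
Qed.

Lemma harmonic_const (w : S -> R) :
  (forall x, \sum_t P x t * w t = w x) -> forall x x', w x = w x'.
Proof.
move=> harm; have [y yrec] := uc.1.
have harm_le x : \sum_t P x t * w t <= w x by rewrite harm.
have wy_le := superharmonic_min_recurrent harm_le yrec.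
have wy_ge : forall x, - w y <= - w x.
  apply: superharmonic_min_recurrent yrec => x.
  by rewrite -(harm x) -sumrN; under eq_bigr do rewrite mulrN.
have wy x : w x = w y by apply/eqP; rewrite eq_le wy_le andbT -lerN2.
by move=> x x'; rewrite !wy.
Qed.

Lemma stationary_transient0 mu x :
  stationary P mu -> ~~ recurrent P x -> mu x = 0.
Proof.
move=> stat xtr; have [mu_ge0 _] := stat.
pose B := [pred u | (0 < mu u) && ~~ recurrent P u].
have no_inflow s t : ~~ ~~ recurrent P s -> ~~ recurrent P t -> P s t = 0.
  move=> /negPn srec ttr; apply/eqP; rewrite eq_le stoch_ge0 andbT leNgt.
  by apply: contra ttr; apply: recurrent_closed.
have clB : closed_under P B.
  move=> u t /andP [mu_u utr] Put; apply/andP; split.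
    exact: lt_le_trans (mulr_gt0 mu_u Put) (stationary_ge_flow _ _ stat).
  have to_rec0 : \sum_(s | ~~ ~~ recurrent P s) P u s = 0.
    have /eqP := stationary_no_outflow no_inflow stat utr.
    by rewrite mulf_eq0 (gt_eqF mu_u) => /eqP.
  apply: contraTN Put => trec.
  by rewrite (psumr_eq0P (fun s _ => stoch_ge0 u s) to_rec0) ?negbK ?ltxx.
apply/eqP; rewrite eq_le mu_ge0 andbT leNgt; apply/negP=> mu_x.
have [y /andP [_ ytr] yrec] := closed_recurrent clB (introT andP (conj mu_x xtr)).
by rewrite yrec in ytr.
Qed.

Lemma stationary_avg_le_superharmonic (w mu : S -> R) :
  (forall x, \sum_t P x t * w t <= w x) -> stationary P mu ->
  forall x, \sum_y mu y * w y <= w x.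
Proof.
move=> super stat x; have [y0 y0rec] := uc.1; have [_ [mu_sum1 _]] := stat.
have on_support y : mu y * w y = mu y * w y0.
  have [yrec|ytr] := boolP (recurrent P y).
    by congr (_ * _); apply/eqP; rewrite eq_le !superharmonic_min_recurrent.
  by rewrite stationary_transient0 // !mul0r.
rewrite (eq_bigr _ (fun y _ => on_support y)) -big_distrl /= mu_sum1 mul1r.
exact: superharmonic_min_recurrent.
Qed.

End MarkovChain.

Section PoissonEquation.
Variables (R : realType) (S : finType) (P : S -> S -> R).
Hypotheses (HP : row_stochastic P) (uc : unichain_chain P).

Local Notation n := #|S|.

Definition rowv (f : S -> R) : 'rV[R]_n := \row_j f (enum_val j).
Definition funv (u : 'rV[R]_n) : S -> R := fun x => u 0 (enum_rank x).

Lemma funv_enum_val u j : funv u (enum_val j) = u 0 j.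
Proof. by rewrite /funv enum_valK. Qed.

Lemma rowvK f : funv (rowv f) = f.
Proof. by apply: funext => x; rewrite /funv /rowv mxE enum_rankK. Qed.

Lemma sum_enum_val (F : S -> R) : \sum_(i < n) F (enum_val i) = \sum_x F x.
Proof. by rewrite -big_enum_val /=; apply: eq_bigl => x; rewrite inE. Qed.

(* The matrix I - P in the enumeration of [S]; row vectors [u] act as functions. *)
Definition IsubP : 'M[R]_n :=
  \matrix_(i, j) ((i == j)%:R - P (enum_val i) (enum_val j)).

Lemma sum_mul_delta (u : 'rV[R]_n) j : \sum_i u 0 i * (i == j)%:R = u 0 j.
Proof.
rewrite (bigD1 j) //= eqxx mulr1 big1 ?addr0 // => i /negbTE ->.
by rewrite mulr0.
Qed.

Lemma mul_IsubP (u : 'rV[R]_n) j :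
  (u *m IsubP) 0 j = funv u (enum_val j) - \sum_x funv u x * P x (enum_val j).
Proof.
rewrite !mxE; under eq_bigr do rewrite !mxE mulrBr.
rewrite sumrB sum_mul_delta funv_enum_val -sum_enum_val.
by congr (_ - _); apply: eq_bigr => i _; rewrite funv_enum_val.
Qed.

Lemma mul_IsubP_tr (u : 'rV[R]_n) j :
  (u *m IsubP^T) 0 j = funv u (enum_val j) - \sum_x P (enum_val j) x * funv u x.
Proof.
rewrite !mxE; under eq_bigr do rewrite !mxE eq_sym mulrBr.
rewrite sumrB sum_mul_delta funv_enum_val -sum_enum_val.
by congr (_ - _); apply: eq_bigr => i _; rewrite funv_enum_val mulrC.
Qed.

Lemma card_S_gt0 : (0 < n)%N.
Proof. by have [s _] := uc.1; apply/card_gt0P; exists s. Qed.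

Lemma rowv1_neq0 : rowv (fun _ => 1) != 0.
Proof.
have [s _] := uc.1; apply/negP=> /eqP /rowP /(_ (enum_rank s)).
by rewrite !mxE => /eqP; rewrite oner_eq0.
Qed.

(* The kernel of (I - P)^T consists of the harmonic functions, i.e. the constants. *)
Lemma kermx_IsubP_tr : (kermx IsubP^T :=: rowv (fun _ => 1))%MS.
Proof.
apply/eqmxP; rewrite andbC; apply/andP; split.
  apply/sub_kermxP/rowP=> j; rewrite mul_IsubP_tr !mxE rowvK.
  by under eq_bigr do rewrite mulr1; rewrite stoch_sum1 ?subrr.
apply/row_subP=> i; set u := row i (kermx IsubP^T).
have harm x : \sum_t P x t * funv u t = funv u x.
  have /rowP/(_ (enum_rank x)) : u *m IsubP^T = 0.
    by rewrite /u -row_mul mulmx_ker row0.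
  by rewrite mul_IsubP_tr enum_rankK mxE => /eqP; rewrite subr_eq0 => /eqP.
have [s0 _] := uc.1.
have -> : u = funv u s0 *: rowv (fun _ => 1).
  apply/rowP=> j; rewrite -[LHS]funv_enum_val !mxE mulr1.
  exact: (harmonic_const HP uc harm).
exact: scalemx_sub.
Qed.

Lemma rank_IsubP_tr : \rank IsubP^T = n.-1.
Proof.
have := mxrank_ker IsubP^T; rewrite kermx_IsubP_tr rank_rV rowv1_neq0.
have := card_S_gt0; move: (\rank _) => k; lia.
Qed.

Lemma stationary_exists : exists mu, stationary P mu.
Proof.
have ker_neq0 : kermx IsubP != 0.
  rewrite -mxrank_eq0 mxrank_ker -mxrank_tr rank_IsubP_tr.
  by have := card_S_gt0; lia.
have [i ker_i] : exists i, row i (kermx IsubP) != 0.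
  case: (pickP (fun i => row i (kermx IsubP) != 0)) => [i|rows0]; first by exists i.
  move/negP: ker_neq0; case; apply/eqP/row_matrixP=> i.
  by move/negbFE/eqP: (rows0 i) ->; rewrite row0.
set v := row i (kermx IsubP) in ker_i.
have [x0 v_x0] : exists x, funv v x != 0.
  case: (pickP (fun x => funv v x != 0)) => [x|v0]; first by exists x.
  move/negP: ker_i; case; apply/eqP/rowP=> j.
  by move/negbFE/eqP: (v0 (enum_val j)); rewrite funv_enum_val => ->; rewrite mxE.
apply: (stationary_of_invariant HP v_x0) => t.
have /rowP/(_ (enum_rank t)) : v *m IsubP = 0.
  by rewrite /v -row_mul mulmx_ker row0.
by rewrite mul_IsubP enum_rankK mxE => /eqP; rewrite subr_eq0 => /eqP.
Qed.

(* The image of I - P is the kernel of the stationary law: both have dimension n - 1. *)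
Lemma poisson_solvable mu (f : S -> R) :
  stationary P mu -> \sum_x mu x * f x = 0 ->
  exists h, forall x, f x = h x - \sum_t P x t * h t.
Proof.
move=> stat f_avg0; have [_ [mu_sum1 mu_inv]] := stat.
have mu_neq0 : rowv mu != 0.
  apply/eqP=> mu0; move: mu_sum1; rewrite big1 => [/eqP|x _].
    by rewrite eq_sym oner_eq0.
  by rewrite -(rowvK mu) mu0 /funv mxE.
have img_sub : (IsubP^T <= kermx (rowv mu)^T)%MS.
  apply/sub_kermxP; rewrite -trmx_mul; apply/eqP; rewrite trmx_eq0; apply/eqP.
  by apply/rowP=> j; rewrite mul_IsubP rowvK mxE -mu_inv subrr.
have ker_sub : (kermx (rowv mu)^T <= IsubP^T)%MS.
  rewrite -(geq_leqif (mxrank_leqif_sup img_sub)) rank_IsubP_tr mxrank_ker.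
  by rewrite mxrank_tr rank_rV mu_neq0; lia.
have f_ker : (rowv f <= kermx (rowv mu)^T)%MS.
  apply/sub_kermxP/rowP=> j; rewrite !mxE -[RHS]f_avg0 -sum_enum_val.
  by apply: eq_bigr => i _; rewrite !mxE mulrC.
have [D defD] := submxP (submx_trans f_ker ker_sub).
exists (funv D) => x; have /rowP/(_ (enum_rank x)) := defD.
by rewrite mul_IsubP_tr enum_rankK mxE enum_rankK.
Qed.

Lemma gain_bias_exists (f : S -> R) : exists g b, gain_bias P f g b.
Proof.
have [mu stat] := stationary_exists; have [_ [mu_sum1 _]] := stat.
pose g := \sum_x mu x * f x.
have [|h defh] := @poisson_solvable mu (fun x => f x - g) stat.
  by under eq_bigr do rewrite mulrBr; rewrite sumrB -big_distrl /= mu_sum1 mul1r subrr.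
pose c := \sum_y mu y * h y.
exists g, (fun x => h x - c); split=> [x|].
  by rewrite stoch_sumB_const //; have := defh x; lra.
exists mu; split=> //.
by under eq_bigr do rewrite mulrBr; rewrite sumrB -big_distrl /= mu_sum1 mul1r subrr.
Qed.

Lemma stationary_unique mu nu : stationary P mu -> stationary P nu -> mu = nu.
Proof.
move=> stat_mu stat_nu; apply: funext => x.
have [g [h [gh _]]] := gain_bias_exists (fun y => (y == x)%:R).
have pick_x (m : S -> R) : \sum_y m y * (y == x)%:R = m x.
  rewrite (bigD1 x) //= eqxx mulr1 big1 ?addr0 // => y /negbTE ->.
  by rewrite mulr0.
by rewrite -pick_x -[RHS]pick_x -(gain_eq_stationary_avg stat_mu gh)
  -(gain_eq_stationary_avg stat_nu gh).
Qed.

Lemma gain_bias_unique (r : S -> R) g b g' b' :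
  gain_bias P r g b -> gain_bias P r g' b' -> g = g' /\ b = b'.
Proof.
move=> [gb [mu [stat b_avg0]]] [gb' [mu' [stat' b'_avg0]]].
have eq_g : g = g'.
  by rewrite (gain_eq_stationary_avg stat gb) (gain_eq_stationary_avg stat gb').
subst g'; split=> //; have [_ [mu_sum1 _]] := stat.
have harm x : \sum_t P x t * (b t - b' t) = b x - b' x.
  by under eq_bigr do rewrite mulrBr; rewrite sumrB; have := gb x; have := gb' x; lra.
have const := harmonic_const HP uc harm; have [x0 _] := uc.1.
have avg0 : \sum_y mu y * (b y - b' y) = 0.
  under eq_bigr do rewrite mulrBr.
  by rewrite sumrB b_avg0 (stationary_unique stat stat') b'_avg0 subrr.
have avg_x0 : \sum_y mu y * (b y - b' y) = b x0 - b' x0.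
  by rewrite (eq_bigr _ (fun y _ => congr1 _ (const y x0))) -big_distrl /= mu_sum1 mul1r.
apply: funext => x; apply/eqP; rewrite -subr_eq0; apply/eqP.
by rewrite (const x x0) -avg_x0 avg0.
Qed.

End PoissonEquation.

Lemma stationary_eq_off (R : realType) (S : finType) (Q Q' : S -> S -> R) mu x :
  (forall y, y != x -> Q y = Q' y) -> mu x = 0 ->
  stationary Q mu -> stationary Q' mu.
Proof.
move=> eq_off mu_x0 [mu_ge0 [mu_sum1 mu_inv]]; split=> //; split=> // t.
rewrite mu_inv; apply: eq_bigr => y _.
by have [->|/eq_off ->] := eqVneq y x; rewrite ?mu_x0 ?mul0r.
Qed.

Section BiasOptimality.
Variables (R : realType) (S : finType) (P0 P1 : S -> S -> R) (r0 r1 : S -> R).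
Hypotheses (H0 : row_stochastic P0) (H1 : row_stochastic P1) (Hu : unichain P0 P1).

Local Notation Ppol := (Ppol P0 P1).
Local Notation rpol := (rpol r0 r1).
Local Notation bias_optimal := (bias_optimal P0 P1 r0 r1).

Lemma Ppol_row_stochastic pi : row_stochastic (Ppol pi).
Proof.
split=> s; rewrite /Ppol; case: (s \in pi);
  [exact: H1.1 | exact: H0.1 | exact: H1.2 | exact: H0.2].
Qed.

Lemma bias_optimal_maximal l pi g b :
  bias_optimal l pi -> gain_bias (Ppol pi) (rpol l pi) g b ->
  forall pi' g' b', gain_bias (Ppol pi') (rpol l pi') g' b' ->
  g' <= g /\ (g' = g -> forall s, b' s <= b s).
Proof.
move=> [gW [bW [gbW opt]]] gb.
by have [<- <-] := gain_bias_unique (Ppol_row_stochastic pi) (Hu pi) gbW gb.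
Qed.

(* If switching the action at [x] strictly improved the one-step value, then (g, b)
   would solve the evaluation equations of the switched policy for a reward lowered
   at [x]; this forces the switched policy to have gain g and a strictly larger bias. *)
Lemma bias_optimal_switch_le l pi g b (pi' : {set S}) x :
  bias_optimal l pi -> gain_bias (Ppol pi) (rpol l pi) g b ->
  (forall y, y != x -> (y \in pi') = (y \in pi)) ->
  rpol l pi' x + \sum_t Ppol pi' x t * b t <= g + b x.
Proof.
move=> bo gb same; have [eqb [mu [stat b_avg0]]] := gb.
rewrite leNgt; apply/negP=> viol.
pose eps := rpol l pi' x + \sum_t Ppol pi' x t * b t - (g + b x).
have eps_gt0 : 0 < eps by rewrite subr_gt0.
have gb_pen y :
    g + b y = rpol l pi' y - (y == x)%:R * eps + \sum_t Ppol pi' y t * b t.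
  have [->|yx] := eqVneq y x; first by rewrite mul1r /eps; lra.
  by rewrite mul0r subr0 /rpol /Ppol same.
have [g' [b' gb']] := gain_bias_exists (Ppol_row_stochastic pi') (Hu pi') (rpol l pi').
have [eqb' [mu' [stat' b'_avg0]]] := gb'; have [mu'_ge0 _] := stat'.
have [g'_le bias_le] := bias_optimal_maximal bo gb gb'.
have g_avg : g = g' - mu' x * eps.
  have pen : \sum_y mu' y * ((y == x)%:R * eps) = mu' x * eps.
    rewrite (bigD1 x) //= eqxx mul1r big1 ?addr0 // => y /negbTE ->.
    by rewrite mul0r mulr0.
  rewrite (gain_eq_stationary_avg stat' gb_pen) (gain_eq_stationary_avg stat' eqb').
  by under eq_bigr do rewrite mulrBr; rewrite sumrB pen.
have mu'_x0 : mu' x = 0.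
  apply/eqP; rewrite eq_le mu'_ge0 andbT -(pmulr_lle0 _ eps_gt0); lra.
have eq_g : g' = g by rewrite g_avg mu'_x0 mul0r subr0.
have eq_mu : mu' = mu.
  have stat'_pi : stationary (Ppol pi) mu'.
    by apply: (stationary_eq_off _ mu'_x0 stat') => y yx; rewrite /Ppol same.
  exact: (stationary_unique (Ppol_row_stochastic pi) (Hu pi) stat'_pi stat).
pose w y := b' y - b y.
have w_super y : \sum_t Ppol pi' y t * w t <= w y - (y == x)%:R * eps.
  under eq_bigr do rewrite mulrBr; rewrite sumrB.
  by have := eqb' y; have := gb_pen y; rewrite /w eq_g; lra.
have w_ge0 y : 0 <= w y.
  have w_avg0 : \sum_z mu' z * w z = 0.
    by under eq_bigr do rewrite mulrBr; rewrite sumrB b'_avg0 eq_mu b_avg0 subrr.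
  rewrite -w_avg0; apply: stationary_avg_le_superharmonic stat' _ => //.
    exact: Ppol_row_stochastic.
  move=> z; apply: le_trans (w_super z) _.
  by rewrite lerBlDr lerDl mulr_ge0 // ltW.
have : eps <= w x.
  have := w_super x; rewrite eqxx mul1r.
  have : 0 <= \sum_t Ppol pi' x t * w t.
    by apply: sumr_ge0 => t _; rewrite mulr_ge0 // (Ppol_row_stochastic pi').1.
  lra.
by have := bias_le eq_g x; rewrite /w; lra.
Qed.

Lemma bias_optimal_bellman l pi g b (sigma : {set S}) x :
  bias_optimal l pi -> gain_bias (Ppol pi) (rpol l pi) g b ->
  rpol l sigma x + \sum_t Ppol sigma x t * b t <= g + b x.
Proof.
move=> bo gb.
pose pi' := if x \in sigma then x |: pi else pi :\ x.
have pi'_x : (x \in pi') = (x \in sigma).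
  by rewrite /pi'; case: (x \in sigma); rewrite !inE eqxx.
have -> : rpol l sigma x = rpol l pi' x by rewrite /rpol pi'_x.
have -> : Ppol sigma x = Ppol pi' x by rewrite /Ppol pi'_x.
apply: bias_optimal_switch_le bo gb _ => y yx.
by rewrite /pi'; case: (x \in sigma); rewrite !inE (negbTE yx).
Qed.

(* Follow [pi1] on its recurrent class and [pi2] elsewhere: both recurrent classes
   are closed for this mixed policy, so unichainness makes them meet. *)
Lemma common_recurrent (pi1 pi2 : {set S}) :
  exists y, recurrent (Ppol pi1) y && recurrent (Ppol pi2) y.
Proof.
set C1 := recurrent (Ppol pi1); set C2 := recurrent (Ppol pi2).
case: (pickP [pred y | C1 y && C2 y]) => [y yC|disj]; first by exists y.
pose sigma := [set x | if C1 x then x \in pi1 else x \in pi2].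
have row_sigma x : Ppol sigma x = if C1 x then Ppol pi1 x else Ppol pi2 x.
  by rewrite /Ppol inE; case: (C1 x).
have cl1 : closed_under (Ppol sigma) C1.
  by move=> x t C1x; rewrite row_sigma C1x; apply: recurrent_closed.
have cl2 : closed_under (Ppol sigma) C2.
  move=> x t C2x; have /= := disj x; rewrite C2x andbT => C1x.
  by rewrite row_sigma C1x; apply: recurrent_closed.
have [x1 C1x1] := (Hu pi1).1; have [x2 C2x2] := (Hu pi2).1.
have [y1 C1y1 y1rec] := closed_recurrent cl1 C1x1.
have [y2 C2y2 y2rec] := closed_recurrent cl2 C2x2.
have /= := disj y2; rewrite C2y2 andbT.
by rewrite (reach_closed cl1 C1y1 ((Hu sigma).2 _ _ y1rec y2rec)).
Qed.

End BiasOptimality.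

Lemma le_of_le_add_decay (R : realType) (a b e M : R) (f : nat -> R) :
  0 <= M -> 0 <= e -> (forall n, n%:R * f n <= e) ->
  (forall n, a <= b + M * f n) -> a <= b.
Proof.
move=> M_ge0 e_ge0 decay bound; rewrite leNgt; apply/negP=> ba.
have eta_gt0 : 0 < a - b by rewrite subr_gt0.
pose N := (Num.Def.archi_bound (M * e / (a - b))).+1.
have N_gt : M * e < N%:R * (a - b).
  rewrite -ltr_pdivrMr // (lt_trans (archi_boundP _)) ?ltr_nat //.
  by rewrite divr_ge0 ?mulr_ge0 // ltW.
have := bound N; have := decay N.
have : 0 <= N%:R :> R by [].
nra.
Qed.

Section HittingTime.
Variables (R : realType) (S : finType) (P : S -> S -> R) (y : S).
Hypothesis HP : row_stochastic P.

Lemma avoid_target n : avoid P y n y = 0.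
Proof. by case: n => [|n] /=; rewrite eqxx. Qed.

Lemma avoidS n x : x != y -> avoid P y n.+1 x = \sum_t P x t * avoid P y n t.
Proof. by move=> /negbTE /= ->. Qed.

Lemma avoid_ge0_le1 n x : 0 <= avoid P y n x <= 1.
Proof.
elim: n x => [|n IH] x /=; case: (x == y); rewrite ?lexx ?ler01 //.
apply/andP; split.
  by apply: sumr_ge0 => t _; rewrite mulr_ge0 ?stoch_ge0 //; case/andP: (IH t).
rewrite -[leRHS](stoch_sum_const HP x 1); apply: ler_sum => t _.
by rewrite ler_wpM2l ?stoch_ge0 //; case/andP: (IH t).
Qed.

Lemma avoid_succ_le n x : avoid P y n.+1 x <= avoid P y n x.
Proof.
elim: n x => [|n IH] x; have [->|xy] := eqVneq x y; rewrite ?avoid_target //.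
  by rewrite [avoid _ _ 0 _]/= (negbTE xy); case/andP: (avoid_ge0_le1 1 x).
by rewrite !avoidS //; apply: ler_sum => t _; rewrite ler_wpM2l ?stoch_ge0.
Qed.

Lemma avoid_le k n x : (k <= n)%N -> avoid P y n x <= avoid P y k x.
Proof.
move=> /subnKC <-; elim: (n - k)%N => [|d IH]; first by rewrite addn0.
by rewrite addnS; apply: le_trans (avoid_succ_le _ _) IH.
Qed.

(* First-step analysis: a drift of [v] bounded by [C] off the target accumulates at
   most [C] per step spent before hitting [y]. *)
Lemma drift_hit_bound (v : S -> R) C M :
  (forall x, x != y -> v x - \sum_t P x t * v t <= C) ->
  (forall t, v t - v y <= M) ->
  forall n x, v x - v y <= C * \sum_(0 <= k < n) avoid P y k x + M * avoid P y n x.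
Proof.
move=> drift vM; elim=> [|n IH] x.
  rewrite big_geq // mulr0 add0r /=; have [->|_] := eqVneq x y.
    by rewrite subrr mulr0.
  by rewrite mulr1.
have [->|xy] := eqVneq x y.
  by rewrite subrr avoid_target mulr0 addr0 big1 ?mulr0 // => k _; apply: avoid_target.
have step : \sum_t P x t * (v t - v y) <=
    C * \sum_(0 <= k < n) avoid P y k.+1 x + M * avoid P y n.+1 x.
  rewrite avoidS // (@eq_big_nat _ _ _ 0 n _ (fun k => \sum_t P x t * avoid P y k t));
    last by move=> k _; apply: avoidS.
  apply: le_trans (ler_sum _ (fun t _ => ler_wpM2l (stoch_ge0 HP x t) (IH t))) _.
  rewrite le_eqVlt; apply/orP; left; apply/eqP.
  rewrite (eq_bigr (fun t => C * (P x t * \sum_(0 <= k < n) avoid P y k t) +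
    M * (P x t * avoid P y n t))) => [|t _]; last by ring.
  rewrite big_split -!big_distrr /=; congr (C * _ + _).
  by under eq_bigr do rewrite big_distrr; rewrite exchange_big.
have := drift x xy; rewrite stoch_sumB_const // in step.
rewrite big_nat_recl // [avoid _ _ 0 x]/= (negbTE xy) mulrDr mulr1; lra.
Qed.

Local Open Scope ereal_scope.

Lemma avoid_partial_sum_le_exp_hit n x :
  (\sum_(0 <= k < n) avoid P y k x)%:E <= exp_hit P x y.
Proof.
rewrite -sumEFin; apply: nneseries_lim_ge => k _ _.
by rewrite lee_fin; case/andP: (avoid_ge0_le1 k x).
Qed.

Lemma drift_exp_hit_bound (v : S -> R) C : (0 < C)%R ->
  (forall x, x != y -> (v x - \sum_t P x t * v t <= C)%R) ->
  forall x, (v x - v y)%:E <= C%:E * exp_hit P x y.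
Proof.
move=> C_gt0 drift x; have psum_le := avoid_partial_sum_le_exp_hit ^~ x.
case E: (exp_hit P x y) psum_le => [e| |] psum_le.
- rewrite -EFinM lee_fin.
  have psum_e n : (\sum_(0 <= k < n) avoid P y k x <= e)%R.
    by have := psum_le n; rewrite lee_fin.
  pose M := (\sum_t `|v t - v y|)%R.
  have vM t : (v t - v y <= M)%R.
    rewrite (le_trans (ler_norm _)) // /M (bigD1 t) //= lerDl.
    exact: sumr_ge0.
  apply: (@le_of_le_add_decay _ _ _ e M (avoid P y ^~ x)).
  + exact: sumr_ge0.
  + by have := psum_e 0%N; rewrite big_geq.
  + move=> n; apply: le_trans (psum_e n).
    have -> : (n%:R * avoid P y n x = \sum_(0 <= k < n) avoid P y n x)%R.
      by rewrite sumr_const_nat subn0 mulr_natl.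
    by apply: ler_sum_nat => k /andP [_ kn]; apply: avoid_le; apply: ltnW.
  + move=> n; apply: le_trans (drift_hit_bound drift vM n x) _.
    by rewrite lerD2r ler_pM2l.
- by rewrite gt0_muley ?lte_fin // leey.
- by have := psum_le 0%N; rewrite big_geq // leeNy_eq.
Qed.

End HittingTime.

Lemma rpol_sub (R : realType) (S : finType) (r0 r1 : S -> R) l1 l2 (pi : {set S}) x :
  rpol r0 r1 l1 pi x - rpol r0 r1 l2 pi x = - (l1 - l2) * (x \in pi)%:R.
Proof. by rewrite /rpol; case: (x \in pi); rewrite ?mulr1 ?mulr0; lra. Qed.

Lemma sub_mul_indicator_le_norm (R : realDomainType) (a G m1 m2 : R) (t : bool) :
  a * m1 <= G -> G <= a * m2 -> 0 <= m1 <= 1 -> 0 <= m2 <= 1 ->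
  G - a * t%:R <= `|a|.
Proof.
move=> am1 am2 /andP [m1_ge0 m1_le1] /andP [m2_ge0 m2_le1].
have [a_ge0|a_lt0] := lerP 0 a.
  rewrite ger0_norm //; have : a * m2 <= a by rewrite ler_piMr.
  by case: t; rewrite ?mulr1 ?mulr0; nra.
rewrite ltr0_norm //; have : a <= a * m1 by rewrite ler_niMr // ltW.
by case: t; rewrite ?mulr1 ?mulr0; nra.
Qed.

Lemma Dmax_ge0 (R : realType) (S : finType) (P0 P1 : S -> S -> R) :
  (0 <= Dmax P0 P1)%E.
Proof.
by apply: (big_rec (fun x => 0 <= x)%E) => // pi x _ x_ge0; rewrite le_max x_ge0 orbT.
Qed.

Lemma exp_hit_le_Dmax (R : realType) (S : finType) (P0 P1 : S -> S -> R)
    (pi : {set S}) x y :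
  recurrent (Ppol P0 P1 pi) y -> (exp_hit (Ppol P0 P1 pi) x y <= Dmax P0 P1)%E.
Proof.
move=> yrec; set Q := Ppol P0 P1 pi.
apply: le_trans (le_bigmax_cond _ (fun pi => diameter (Ppol P0 P1 pi)) (isT : xpredT pi)).
apply: le_trans (le_bigmax_cond _ (fun s => \big[Order.max/0%E]_(s' | recurrent Q s')
  exp_hit Q s s') (isT : xpredT x)).
exact: (le_bigmax_cond _ (exp_hit Q x) yrec).
Qed.

Section BiasDifference.
Variables (R : realType) (S : finType) (P0 P1 : S -> S -> R) (r0 r1 : S -> R).
Hypotheses (H0 : row_stochastic P0) (H1 : row_stochastic P1) (Hu : unichain P0 P1).

Local Notation Ppol := (Ppol P0 P1).
Local Notation rpol := (rpol r0 r1).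
Local Notation bias_optimal := (bias_optimal P0 P1 r0 r1).
Local Notation act_adv := (act_adv P0 P1 r0 r1).

Lemma bias_optimal_unique l (pi1 pi2 : {set S}) g1 g2 b1 b2 :
  bias_optimal l pi1 -> gain_bias (Ppol pi1) (rpol l pi1) g1 b1 ->
  bias_optimal l pi2 -> gain_bias (Ppol pi2) (rpol l pi2) g2 b2 -> b1 = b2.
Proof.
move=> bo1 gb1 bo2 gb2.
have [g21 b21] := bias_optimal_maximal H0 H1 Hu bo1 gb1 gb2.
have [g12 b12] := bias_optimal_maximal H0 H1 Hu bo2 gb2 gb1.
have eq_g : g2 = g1 by apply/eqP; rewrite eq_le g21 g12.
by apply: funext => x; apply/eqP; rewrite eq_le b12 ?b21.
Qed.

(* The evaluation equation of [pi1] in M(l1) minus the Bellman inequality of [pi2]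
   in M(l2), both taken at the action of [pi1]. *)
Lemma bias_diff_drift l1 l2 (pi1 pi2 : {set S}) g1 g2 b1 b2 x :
  gain_bias (Ppol pi1) (rpol l1 pi1) g1 b1 ->
  bias_optimal l2 pi2 -> gain_bias (Ppol pi2) (rpol l2 pi2) g2 b2 ->
  (b1 x - b2 x) - \sum_t Ppol pi1 x t * (b1 t - b2 t) <=
  (g2 - g1) - (l1 - l2) * (x \in pi1)%:R.
Proof.
move=> [eqb1 _] bo2 gb2; under eq_bigr do rewrite mulrBr; rewrite sumrB.
have := eqb1 x; have := bias_optimal_bellman H0 H1 Hu pi1 x bo2 gb2.
have := rpol_sub r0 r1 l1 l2 pi1 x; lra.
Qed.

Lemma gain_diff_lower l1 l2 (pi1 pi2 : {set S}) g1 g2 b1 b2 mu :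
  gain_bias (Ppol pi1) (rpol l1 pi1) g1 b1 ->
  bias_optimal l2 pi2 -> gain_bias (Ppol pi2) (rpol l2 pi2) g2 b2 ->
  stationary (Ppol pi1) mu ->
  (l1 - l2) * \sum_x mu x * (x \in pi1)%:R <= g2 - g1.
Proof.
move=> gb1 bo2 gb2 stat; have [mu_ge0 [mu_sum1 _]] := stat.
move: (stationary_avg_defect0 (fun t => b1 t - b2 t) stat) => /= defect0.
have avg_le : \sum_x mu x * ((b1 x - b2 x) - \sum_t Ppol pi1 x t * (b1 t - b2 t)) <=
    \sum_x mu x * ((g2 - g1) - (l1 - l2) * (x \in pi1)%:R).
  by apply: ler_sum => x _; rewrite ler_wpM2l // (bias_diff_drift x gb1 bo2 gb2).
have avg_rhs : \sum_x mu x * ((g2 - g1) - (l1 - l2) * (x \in pi1)%:R) =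
    (g2 - g1) - (l1 - l2) * \sum_x mu x * (x \in pi1)%:R.
  under eq_bigr do rewrite mulrBr; rewrite sumrB -big_distrl /= mu_sum1 mul1r.
  by congr (_ - _); rewrite big_distrr; apply: eq_bigr => x _; rewrite mulrCA.
by move: avg_le; rewrite defect0 avg_rhs subr_ge0.
Qed.

Lemma bias_diff_drift_le_norm l1 l2 (pi1 pi2 : {set S}) g1 g2 b1 b2 x :
  bias_optimal l1 pi1 -> gain_bias (Ppol pi1) (rpol l1 pi1) g1 b1 ->
  bias_optimal l2 pi2 -> gain_bias (Ppol pi2) (rpol l2 pi2) g2 b2 ->
  (b1 x - b2 x) - \sum_t Ppol pi1 x t * (b1 t - b2 t) <= `|l1 - l2|.
Proof.
move=> bo1 gb1 bo2 gb2.
have [_ [mu1 [stat1 _]]] := gb1; have [_ [mu2 [stat2 _]]] := gb2.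
have occupation_01 (mu : S -> R) (pi : {set S}) : stationary (Ppol pi) mu ->
    0 <= \sum_x mu x * (x \in pi)%:R <= 1.
  move=> [mu_ge0 [mu_sum1 _]]; apply/andP; split.
    by apply: sumr_ge0 => z _; rewrite mulr_ge0.
  rewrite -[leRHS]mu_sum1; apply: ler_sum => z _.
  by rewrite ler_piMr //; case: (z \in pi); rewrite ?ler01.
apply: le_trans (bias_diff_drift x gb1 bo2 gb2) _.
apply: sub_mul_indicator_le_norm (occupation_01 _ _ stat1) (occupation_01 _ _ stat2).
  exact: gain_diff_lower gb1 bo2 gb2 stat1.
have := gain_diff_lower gb2 bo1 gb1 stat2; lra.
Qed.

Lemma bias_diff_le_Dmax l1 l2 (pi1 pi2 : {set S}) g1 g2 b1 b2 D x y :
  l1 != l2 -> Dmax P0 P1 = D%:E -> recurrent (Ppol pi1) y ->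
  bias_optimal l1 pi1 -> gain_bias (Ppol pi1) (rpol l1 pi1) g1 b1 ->
  bias_optimal l2 pi2 -> gain_bias (Ppol pi2) (rpol l2 pi2) g2 b2 ->
  (b1 x - b2 x) - (b1 y - b2 y) <= `|l1 - l2| * D.
Proof.
move=> l12 Dfin yrec bo1 gb1 bo2 gb2.
have dl_gt0 : 0 < `|l1 - l2| by rewrite normr_gt0 subr_eq0.
have := drift_exp_hit_bound (y := y) (v := fun t => b1 t - b2 t)
  (Ppol_row_stochastic H0 H1 pi1) dl_gt0
  (fun x _ => bias_diff_drift_le_norm x bo1 gb1 bo2 gb2) x.
move/le_trans/(_ (lee_wpmul2l (ltW _) (exp_hit_le_Dmax x yrec))).
by rewrite Dfin -EFinM lee_fin lte_fin; apply.
Qed.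

Lemma act_adv_sub l1 l2 b1 b2 s c :
  act_adv b1 l1 s - act_adv b2 l2 s =
  - (l1 - l2) + (\sum_t P1 s t * (b1 t - b2 t - c) - \sum_t P0 s t * (b1 t - b2 t - c)).
Proof.
have sumBl (f : S -> R) : \sum_t (P1 s t - P0 s t) * f t =
    \sum_t P1 s t * f t - \sum_t P0 s t * f t.
  by rewrite -sumrB; apply: eq_bigr => t _; rewrite mulrBl.
have sumBr (Q : S -> S -> R) : \sum_t Q s t * (b1 t - b2 t) =
    \sum_t Q s t * b1 t - \sum_t Q s t * b2 t.
  by rewrite -sumrB; apply: eq_bigr => t _; rewrite mulrBr.
rewrite /act_adv (stoch_sumB_const H1) (stoch_sumB_const H0) !sumBl !sumBr; lra.
Qed.

Lemma act_adv_lipschitz_fin l1 l2 (pi1 pi2 : {set S}) g1 g2 b1 b2 D s :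
  Dmax P0 P1 = D%:E ->
  bias_optimal l1 pi1 -> gain_bias (Ppol pi1) (rpol l1 pi1) g1 b1 ->
  bias_optimal l2 pi2 -> gain_bias (Ppol pi2) (rpol l2 pi2) g2 b2 ->
  `|act_adv b1 l1 s - act_adv b2 l2 s| <= (2 * D + 1) * `|l1 - l2|.
Proof.
move=> Dfin bo1 gb1 bo2 gb2.
have [eq_l|l12] := eqVneq l1 l2.
  subst l2; by rewrite (bias_optimal_unique bo1 gb1 bo2 gb2) !subrr normr0 mulr0.
have [y /andP [y1rec y2rec]] := common_recurrent Hu pi1 pi2.
pose w t := b1 t - b2 t - (b1 y - b2 y).
have w_le t : `|w t| <= `|l1 - l2| * D.
  rewrite ler_norml (bias_diff_le_Dmax t l12 Dfin y1rec bo1 gb1 bo2 gb2) andbT.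
  have l21 : l2 != l1 by rewrite eq_sym.
  have := bias_diff_le_Dmax t l21 Dfin y2rec bo2 gb2 bo1 gb1.
  by rewrite distrC /w; lra.
rewrite (act_adv_sub _ _ _ _ _ (b1 y - b2 y)) -/w.
apply: le_trans (ler_normD _ _) _; rewrite normrN.
apply: le_trans (lerD (lexx _) (ler_normB _ _)) _.
have := stoch_norm_le H1 s w_le; have := stoch_norm_le H0 s w_le; lra.
Qed.

End BiasDifference.

Unset Implicit Arguments.

Theorem mainTheorem9 (R : realType) (S : finType)
  (P0 P1 : S -> S -> R) (r0 r1 : S -> R) :
  row_stochastic P0 -> row_stochastic P1 -> unichain P0 P1 ->
  forall (s : S) (l1 l2 : R) (pi1 pi2 : {set S}) (g1 g2 : R) (b1 b2 : S -> R),
  bias_optimal P0 P1 r0 r1 l1 pi1 ->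
  gain_bias (Ppol P0 P1 pi1) (rpol r0 r1 l1 pi1) g1 b1 ->
  bias_optimal P0 P1 r0 r1 l2 pi2 ->
  gain_bias (Ppol P0 P1 pi2) (rpol r0 r1 l2 pi2) g2 b2 ->
  (`|act_adv P0 P1 r0 r1 b1 l1 s - act_adv P0 P1 r0 r1 b2 l2 s|%:E
     <= (2%:E * Dmax P0 P1 + 1%:E) * `|l1 - l2|%:E)%E.
Proof.
move=> H0 H1 Hu s l1 l2 pi1 pi2 g1 g2 b1 b2 bo1 gb1 bo2 gb2.
case Dfin: (Dmax P0 P1) (Dmax_ge0 P0 P1) => [D| |] // _.
  rewrite [X in (_ <= X)%E]/= lee_fin.
  by rewrite (act_adv_lipschitz_fin H0 H1 Hu s Dfin bo1 gb1 bo2 gb2).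
have [eq_l|l12] := eqVneq l1 l2.
  subst l2; rewrite (bias_optimal_unique H0 H1 Hu bo1 gb1 bo2 gb2).
  by rewrite !subrr normr0 mule0.
have dl_gt0 : 0 < `|l1 - l2| by rewrite normr_gt0 subr_eq0.
by rewrite gt0_muley ?lte_fin // addye // gt0_mulye ?lte_fin // leey.
Qed.
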